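(* In the 2SDI setting where Alice measures the qubit observables $A_0=\sigma_x$, $A_1=\sigma_y$ and Bob and Charlie are black boxes, the Mermin family $P^V_{MF}$ demonstrates tripartite steering (i.e. admits no 2SDI fully LHS-LHV model) whenever $V>\frac12$.
   Context: Outcomes and settings: $a,b,c,x,y,z\in\{0,1\}$. For a qubit observable $O$ with eigenvalues $\pm1$, the measurement has projectors $M_0=(\mathbb 1+O)/2$, $M_1=(\mathbb 1-O)/2$; $M^A_{a|x}$ denotes the projectors of $A_x$. Mermin family ($0<V\le1$): $P^V_{MF}(abc|xyz)=\frac{1+(-1)^{a\oplus b\oplus c\oplus xy\oplus yz\oplus xz}\,\delta_{x\oplus y\oplus1,z}\,V}{8}$. 2SDI fully LHS-LHV model: there exist probabilities $q_\lambda$, qubit states $\rho^\lambda_A$ and arbitrary conditional distributions $P_\lambda(b|y)$, $P_\lambda(c|z)$ with $P(abc|xyz)=\sum_\lambda q_\lambda \mathrm{Tr}(M^A_{a|x}\rho^\lambda_A)P_\lambda(b|y)P_\lambda(c|z)$ for all $a,b,c,x,y,z$. A correlation demonstrates tripartite steering in the 2SDI scenario iff it admits no such model. *)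

From Stdlib Require Import Reals.
Open Scope R_scope.

Record C := mkC { Re : R; Im : R }.
Definition C0 : C := mkC 0 0.
Definition C1 : C := mkC 1 0.
Definition Cadd (u v : C) : C := mkC (Re u + Re v) (Im u + Im v).
Definition Cmul (u v : C) : C :=
  mkC (Re u * Re v - Im u * Im v) (Re u * Im v + Im u * Re v).
Definition Cconj (u : C) : C := mkC (Re u) (- Im u).
Definition Cscale (r : R) (u : C) : C := mkC (r * Re u) (r * Im u).

(** 2x2 complex matrices, indices in {0,1} encoded as bool (false = 0, true = 1). *)
Definition mat := bool -> bool -> C.
Definition csum2 (f : bool -> C) : C := Cadd (f false) (f true).
Definition mmul (A B : mat) : mat := fun i j => csum2 (fun k => Cmul (A i k) (B k j)).
Definition mtrace (A : mat) : C := csum2 (fun i => A i i).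
Definition madd (A B : mat) : mat := fun i j => Cadd (A i j) (B i j).
Definition mscale (r : R) (A : mat) : mat := fun i j => Cscale r (A i j).

Definition id2 : mat := fun i j => if Bool.eqb i j then C1 else C0.
Definition sigma_x : mat := fun i j => if Bool.eqb i j then C0 else C1.
Definition sigma_y : mat := fun i j =>
  match i, j with
  | false, true => mkC 0 (-1)
  | true, false => mkC 0 1
  | _, _ => C0
  end.

Definition hermitian (A : mat) : Prop := forall i j, A i j = Cconj (A j i).
Definition psd (A : mat) : Prop :=
  hermitian A /\
  forall v : bool -> C,
    0 <= Re (csum2 (fun i => csum2 (fun j => Cmul (Cconj (v i)) (Cmul (A i j) (v j))))).
Definition density (rho : mat) : Prop := psd rho /\ mtrace rho = C1.

Definition sgn (b : bool) : R := if b then -1 else 1.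
Definition proj (O : mat) (a : bool) : mat := mscale (/2) (madd id2 (mscale (sgn a) O)).

Definition born (M rho : mat) : R := Re (mtrace (mmul M rho)).

Fixpoint rsum (n : nat) (f : nat -> R) : R :=
  match n with O => 0 | S m => rsum m f + f m end.

(** Tripartite correlations P(abc|xyz), outcomes and settings in {0,1} as bool. *)
Definition corr := bool -> bool -> bool -> bool -> bool -> bool -> R.

Definition mermin (V : R) : corr := fun a b c x y z =>
  (1 + sgn (xorb a (xorb b (xorb c (xorb (x && y) (xorb (y && z) (x && z))))))
       * (if Bool.eqb (negb (xorb x y)) z then 1 else 0) * V) / 8.

Definition alice_obs (x : bool) : mat := if x then sigma_y else sigma_x.

(** 2SDI fully LHS-LHV model (finitely many hidden variables lambda < n). *)
Definition fully_LHS_LHV (A : bool -> mat) (P : corr) : Prop :=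
  exists (n : nat) (q : nat -> R) (rho : nat -> mat)
         (PB : nat -> bool -> bool -> R) (PC : nat -> bool -> bool -> R),
    (forall l, (l < n)%nat -> 0 <= q l) /\ rsum n q = 1 /\
    (forall l, (l < n)%nat -> density (rho l)) /\
    (forall l b y, (l < n)%nat -> 0 <= PB l b y) /\
    (forall l y, (l < n)%nat -> PB l false y + PB l true y = 1) /\
    (forall l c z, (l < n)%nat -> 0 <= PC l c z) /\
    (forall l z, (l < n)%nat -> PC l false z + PC l true z = 1) /\
    (forall a b c x y z,
        P a b c x y z =
        rsum n (fun l => q l * born (proj (A x) a) (rho l) * PB l b y * PC l c z)).

(** Consider the Mermin expression
    S = <A0 B0 C1> + <A0 B1 C0> + <A1 B0 C0> - <A1 B1 C1>.
    On the Mermin family it equals 4V.  In a 2SDI model each hidden variable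
    contributes q * (X (B0 C1 + B1 C0) + Y (B0 C0 - B1 C1)), where (X, Y) are
    the sigma_x, sigma_y components of Alice's Bloch vector, so X^2 + Y^2 <= 1,
    and B_y, C_z in [-1, 1] are the biases of Bob's and Charlie's boxes.  The
    coefficient vector has squared length (B0^2 + B1^2)(C0^2 + C1^2) <= 4, so
    by Cauchy-Schwarz each contribution is at most 2q and S <= 2 < 4V. *)

From Pilot Require Import Defs.
From Stdlib Require Import Reals Lra Psatz.
Open Scope R_scope.

Lemma rsum_le (n : nat) (f g : nat -> R) :
  (forall l, (l < n)%nat -> f l <= g l) -> rsum n f <= rsum n g.
Proof.
  induction n as [|n IH]; intros Hfg; simpl; [lra|].
  assert (rsum n f <= rsum n g) by (apply IH; intros; apply Hfg; lia).
  assert (f n <= g n) by (apply Hfg; lia).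
  lra.
Qed.

Lemma rsum_scal_l (n : nat) (c : R) (f : nat -> R) :
  rsum n (fun l => c * f l) = c * rsum n f.
Proof. induction n as [|n IH]; simpl; [|rewrite IH]; ring. Qed.

Definition sumb (f : bool -> R) : R := f false + f true.

Definition bias (p : bool -> R) : R := p false - p true.

Lemma bias_bound (p : bool -> R) :
  0 <= p false -> 0 <= p true -> p false + p true = 1 -> -1 <= bias p <= 1.
Proof. unfold bias; lra. Qed.

Definition correlator (P : corr) (x y z : bool) : R :=
  sumb (fun a => sumb (fun b => sumb (fun c =>
    sgn a * sgn b * sgn c * P a b c x y z))).

Definition mermin_value (P : corr) : R :=
  correlator P false false true + correlator P false true false
  + correlator P true false false - correlator P true true true.

Lemma mermin_value_plus (P Q : corr) :
  mermin_value (fun a b c x y z => P a b c x y z + Q a b c x y z)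
  = mermin_value P + mermin_value Q.
Proof. cbv [mermin_value correlator sumb]. ring. Qed.

Lemma mermin_value_rsum (n : nat) (P : nat -> corr) :
  mermin_value (fun a b c x y z => rsum n (fun l => P l a b c x y z))
  = rsum n (fun l => mermin_value (P l)).
Proof.
  induction n as [|n IH].
  - cbv [mermin_value correlator sumb rsum]. ring.
  - exact (eq_trans (mermin_value_plus _ (P n)) (f_equal (fun s => s + _) IH)).
Qed.

Lemma correlator_product (q : R) (pA pB pC : bool -> bool -> R) (x y z : bool) :
  correlator (fun a b c x y z => q * pA a x * pB b y * pC c z) x y z
  = q * bias (fun a => pA a x) * bias (fun b => pB b y) * bias (fun c => pC c z).
Proof. cbv [correlator sumb bias sgn]. ring. Qed.

Definition expect (O rho : mat) : R := Re (mtrace (mmul O rho)).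

Lemma bias_born_proj (O rho : mat) :
  bias (fun a => born (proj O a) rho) = expect O rho.
Proof.
  cbv [bias born proj expect mtrace mmul csum2 madd mscale id2 Cadd Cmul Cscale
       Defs.C0 Defs.C1 sgn Bool.eqb].
  simpl. field.
Qed.

Lemma psd_offdiag_bound (rho : mat) :
  psd rho ->
  Re (rho false true) ^ 2 + Im (rho false true) ^ 2
  <= Re (rho false false) * Re (rho true true).
Proof.
  intros [Hherm Hpos].
  pose proof (Hherm true false) as E10.
  pose proof (Hherm false false) as E00.
  pose proof (Hherm true true) as E11.
  destruct (rho false true) as [p s] eqn:E01.
  destruct (rho false false) as [a0 b0] eqn:D0, (rho true true) as [a3 b3] eqn:D1.
  cbv [Cconj] in E00, E11; injection E00 as Hb0; injection E11 as Hb3.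
  replace b0 with 0 in * by lra; replace b3 with 0 in * by lra.
  (* With r = rho_01, the test vectors (rho_11, -r^* ), (-r, rho_00) and (1, -r^* )
     give rho_11 (rho_00 rho_11 - |r|^2) >= 0, rho_00 (rho_00 rho_11 - |r|^2) >= 0
     and rho_00 + (rho_11 - 2) |r|^2 >= 0; the last two cover rho_11 = 0. *)
  pose proof (Hpos (fun i => if i then mkC (- p) s else mkC a3 0)) as H1.
  pose proof (Hpos (fun i => if i then mkC a0 0 else mkC (- p) (- s))) as H2.
  pose proof (Hpos (fun i => if i then mkC (- p) s else Defs.C1)) as H3.
  pose proof (Hpos (fun i => if i then Defs.C1 else Defs.C0)) as H00.
  pose proof (Hpos (fun i => if i then Defs.C0 else Defs.C1)) as H11.
  cbv [csum2 Cadd Cmul Cconj Defs.C0 Defs.C1] in *; rewrite E10, E01, D0, D1 in *.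
  simpl in *.
  destruct (Rle_lt_dec a3 0) as [Ha3 | Ha3]; [replace a3 with 0 in * by lra|]; nra.
Qed.

Lemma density_bloch_xy (rho : mat) :
  density rho -> expect sigma_x rho ^ 2 + expect sigma_y rho ^ 2 <= 1.
Proof.
  intros [Hpsd Htr].
  pose proof (psd_offdiag_bound rho Hpsd) as Hoff.
  pose proof (proj1 Hpsd true false) as E10.
  pose proof (f_equal Re Htr) as Tr.
  cbv [expect mtrace mmul csum2 sigma_x sigma_y Cadd Cmul Cconj Defs.C0 Defs.C1 Bool.eqb]
    in *.
  simpl in *.
  rewrite E10; simpl.
  assert (4 * (Re (rho false false) * Re (rho true true)) <= 1).
  { pose proof (pow2_ge_0 (Re (rho false false) - Re (rho true true))). nra. }
  nra.
Qed.

Lemma mermin_local_bound (X Y b0 b1 c0 c1 : R) :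
  X ^ 2 + Y ^ 2 <= 1 ->
  -1 <= b0 <= 1 -> -1 <= b1 <= 1 -> -1 <= c0 <= 1 -> -1 <= c1 <= 1 ->
  X * (b0 * c1 + b1 * c0) + Y * (b0 * c0 - b1 * c1) <= 2.
Proof.
  intros HXY HB0 HB1 HC0 HC1.
  set (u := b0 * c1 + b1 * c0); set (w := b0 * c0 - b1 * c1).
  assert (Huw : u ^ 2 + w ^ 2 <= 4).
  { replace (u ^ 2 + w ^ 2) with ((b0 ^ 2 + b1 ^ 2) * (c0 ^ 2 + c1 ^ 2))
      by (unfold u, w; ring).
    assert (Hb : 0 <= b0 ^ 2 + b1 ^ 2 <= 2) by nra.
    assert (Hc : 0 <= c0 ^ 2 + c1 ^ 2 <= 2) by nra.
    revert Hb Hc; generalize (b0 ^ 2 + b1 ^ 2) (c0 ^ 2 + c1 ^ 2); intros; nra. }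
  clearbody u w.
  assert (Hcs : (X * u + Y * w) ^ 2 <= (X ^ 2 + Y ^ 2) * (u ^ 2 + w ^ 2)).
  { pose proof (pow2_ge_0 (X * w - Y * u)). nra. }
  assert (Hsq : (X * u + Y * w) ^ 2 <= 2 ^ 2).
  { pose proof (pow2_ge_0 X); pose proof (pow2_ge_0 Y). nra. }
  apply Rsqr_incr_0_var; [unfold Rsqr; nra | lra].
Qed.

Lemma mermin_value_lhs_term_le (q : R) (rho : mat) (pB pC : bool -> bool -> R) :
  0 <= q -> density rho ->
  (forall y, 0 <= pB false y /\ 0 <= pB true y /\ pB false y + pB true y = 1) ->
  (forall z, 0 <= pC false z /\ 0 <= pC true z /\ pC false z + pC true z = 1) ->
  mermin_value (fun a b c x y z => q * born (proj (alice_obs x) a) rho * pB b y * pC c z)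
  <= 2 * q.
Proof.
  intros Hq Hrho HpB HpC.
  unfold mermin_value; rewrite !correlator_product, !bias_born_proj.
  assert (HB : forall y, -1 <= bias (fun b => pB b y) <= 1).
  { intros y; destruct (HpB y) as (? & ? & ?); now apply bias_bound. }
  assert (HC : forall z, -1 <= bias (fun c => pC c z) <= 1).
  { intros z; destruct (HpC z) as (? & ? & ?); now apply bias_bound. }
  pose proof (mermin_local_bound _ _ _ _ _ _ (density_bloch_xy rho Hrho)
                (HB false) (HB true) (HC false) (HC true)) as Hloc.
  simpl. nra.
Qed.

Lemma mermin_value_lhs_le (P : corr) :
  fully_LHS_LHV alice_obs P -> mermin_value P <= 2.
Proof.
  intros (n & q & rho & PB & PC & Hq & Hsum & Hrho & HPB & HPB1 & HPC & HPC1 & HP).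
  replace (mermin_value P) with (mermin_value (fun a b c x y z =>
      rsum n (fun l => q l * born (proj (alice_obs x) a) (rho l) * PB l b y * PC l c z)))
    by (cbv [mermin_value correlator sumb]; rewrite !HP; reflexivity).
  rewrite mermin_value_rsum.
  replace 2 with (2 * rsum n q) by (rewrite Hsum; ring).
  rewrite <- rsum_scal_l.
  apply rsum_le; intros l Hl.
  apply mermin_value_lhs_term_le; auto.
Qed.

Lemma mermin_value_mermin (V : R) : mermin_value (mermin V) = 4 * V.
Proof. cbv [mermin_value correlator sumb mermin sgn]; simpl; field. Qed.

Theorem proposition8 (V : R) (HV0 : 0 < V) (HV1 : V <= 1) (HV : / 2 < V) :
  ~ fully_LHS_LHV alice_obs (mermin V).
Proof.
  intros Hlhs.
  pose proof (mermin_value_lhs_le _ Hlhs) as Hle.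
  rewrite mermin_value_mermin in Hle.
  lra.
Qed.
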